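(* Let $m\ge2$ be an integer and let $\omega\in\mathbb{R}^d$ with $\nu(\omega;\sigma)<\infty$ for some $\sigma>md$. Then Lebesgue-almost every point of the unit circle $\{|\lambda|=1\}$ is $m$-tangentially accessible for the set $\bigcup_{A>0}\Upsilon(A;\omega,\sigma)$. More precisely, for every $\eta>0$ there is $A>0$ such that the set of points of the unit circle that are $m$-tangentially accessible for $\Upsilon(A;\omega,\sigma)$ has complement in the unit circle of one-dimensional Lebesgue measure less than $\eta$.
   Context: $|k|=\sum_i|k_i|$; $\nu(\omega;\sigma)=\sup_{k\in\mathbb{Z}^d\setminus\{0\}}|e^{2\pi ik\cdot\omega}-1|^{-1}|k|^{-\sigma}$; $\nu(\lambda;\omega,\sigma)=\sup_{k\in\mathbb{Z}^d\setminus\{0\}}|e^{2\pi ik\cdot\omega}-\lambda|^{-1}|k|^{-\sigma}$. $\Upsilon(A;\omega,\sigma)=\{\lambda\in\mathbb{C}:\nu(\lambda;\omega,\sigma)\le A\}$, i.e. the complement of $\bigcup_{k\ne0}\{\lambda:|e^{2\pi ik\cdot\omega}-\lambda|<A^{-1}|k|^{-\sigma}\}$. Tangential accessibility: a point $\lambda_0$ is $m$-tangentially accessible for a set $\mathcal{C}\subseteq\mathbb{C}$ if there exist a unit complex number $u$ and $\delta>0$, $\gamma>0$ such that $\{\lambda_0+(t+is)u:\ |t|,|s|<\delta,\ s\ge\gamma|t|^m\}\subseteq\mathcal{C}$. *)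

(* classical reals. Complex numbers are pairs (x, y) : R * R. *)
From Stdlib Require Import Reals ZArith.
Open Scope R_scope.

Fixpoint sumR (n : nat) (f : nat -> R) : R :=
  match n with O => 0 | S n' => sumR n' f + f n' end.

(* k in Z^d and omega in R^d are represented by functions on indices < d *)
Definition dotZR (d : nat) (k : nat -> Z) (w : nat -> R) : R :=
  sumR d (fun i => IZR (k i) * w i).

Definition knorm (d : nat) (k : nat -> Z) : R :=
  sumR d (fun i => IZR (Z.abs (k i))).

Definition knonzero (d : nat) (k : nat -> Z) : Prop :=
  exists i, (i < d)%nat /\ k i <> 0%Z.

Definition cadd (p q : R * R) : R * R := (fst p + fst q, snd p + snd q).
Definition cmul (p q : R * R) : R * R :=
  (fst p * fst q - snd p * snd q, fst p * snd q + snd p * fst q).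
Definition cnorm (p : R * R) : R := sqrt (fst p ^ 2 + snd p ^ 2).
Definition cdist (p q : R * R) : R :=
  sqrt ((fst p - fst q) ^ 2 + (snd p - snd q) ^ 2).

Definition expi2pi (x : R) : R * R := (cos (2 * PI * x), sin (2 * PI * x)).

(* nu(omega; sigma) < infinity : the sup over k <> 0 of
   |e^{2 pi i k.omega} - 1|^{-1} |k|^{-sigma} is finite (in particular each
   term is finite, i.e. e^{2 pi i k.omega} <> 1). *)
Definition nu_finite (d : nat) (w : nat -> R) (sigma : R) : Prop :=
  exists B : R, forall k, knonzero d k ->
    0 < cdist (expi2pi (dotZR d k w)) (1, 0) /\
    / cdist (expi2pi (dotZR d k w)) (1, 0) * Rpower (knorm d k) (- sigma) <= B.

Definition Upsilon (d : nat) (w : nat -> R) (sigma A : R) (lam : R * R) : Prop :=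
  forall k, knonzero d k ->
    ~ (cdist (expi2pi (dotZR d k w)) lam < / A * Rpower (knorm d k) (- sigma)).

Definition tang_accessible (m : nat) (C : R * R -> Prop) (lam0 : R * R) : Prop :=
  exists u : R * R, cnorm u = 1 /\
  exists delta gamma : R, 0 < delta /\ 0 < gamma /\
    forall t s : R, Rabs t < delta -> Rabs s < delta -> gamma * Rabs t ^ m <= s ->
      C (cadd lam0 (cmul (t, s) u)).

(* A set E of angles theta in [0, 2 pi) (i.e. of points (cos theta, sin theta)
   of the unit circle, arc-length measure) has Lebesgue (outer) measure < eta:
   it is covered by countably many open intervals of total length < eta. *)
Definition small_angle_set (E : R -> Prop) (eta : R) : Prop :=
  exists a b : nat -> R,
    (forall n, a n <= b n) /\
    (exists eta', eta' < eta /\ forall N, sumR N (fun n => b n - a n) <= eta') /\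
    (forall theta, E theta -> exists n, a n < theta < b n).

Definition bad_angles (m : nat) (C : R * R -> Prop) (theta : R) : Prop :=
  0 <= theta < 2 * PI /\ ~ tang_accessible m C (cos theta, sin theta).

From Stdlib Require Import Reals ZArith Lra Lia Psatz List Classical.
Open Scope R_scope.

(* If [1 - cos (2 PI k.omega - theta) >= A^{-1} |k|^{-sigma}] for every [k <> 0],
   then [e^{i theta}] is accessible, even from the whole outward half-square: a
   point outside the circle near [e^{i theta}] is at distance at least
   [1 - cos (phi - theta)] from [e^{i phi}], and the discs defining Upsilon are
   centred on the circle. Since [1 - cos b >= b^2 / 64] on [[-PI, PI]], every
   other angle lies within [8 A^{-1/2} |k|^{-sigma/2}] of some [2 PI k.omega]
   modulo [2 PI]. The [k] with [2^j <= |k| < 2^(j+1)] contribute arcs of total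
   length [O(8^d A^{-1/2} 2^{j (d - sigma/2)})], which is summable in [j] as
   [sigma > m d >= 2 d]; so the exceptional set has measure [O(A^{-1/2})]. *)

Lemma sumR_ext n f g : (forall i, (i < n)%nat -> f i = g i) -> sumR n f = sumR n g.
Proof.
  induction n as [|n IH]; intros H; simpl; [reflexivity|].
  rewrite IH by (intros; apply H; lia). rewrite H by lia. reflexivity.
Qed.

Lemma sumR_le n f g : (forall i, (i < n)%nat -> f i <= g i) -> sumR n f <= sumR n g.
Proof.
  induction n as [|n IH]; intros H; simpl; [lra|].
  apply Rplus_le_compat; [apply IH; intros; apply H|apply H]; lia.
Qed.

Lemma sumR_scal n c f : sumR n (fun i => c * f i) = c * sumR n f.
Proof. induction n as [|n IH]; simpl; [ring|]. rewrite IH; ring. Qed.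

Lemma sumR_geom_le q n : 0 <= q < 1 -> sumR n (fun j => q ^ j) <= / (1 - q).
Proof.
  intros Hq.
  assert (Hsum : sumR n (fun j => q ^ j) * (1 - q) = 1 - q ^ n).
  { induction n as [|n IH]; simpl; [ring|]. rewrite Rmult_plus_distr_r, IH; ring. }
  assert (0 <= q ^ n) by (apply pow_le; lra).
  apply Rmult_le_reg_r with (1 - q); [lra|]. rewrite Hsum, Rinv_l by lra. lra.
Qed.

Definition total_length (l : list (R * R)) : R :=
  fold_right (fun y acc => (snd y - fst y) + acc) 0 l.

Lemma total_length_app l l' : total_length (l ++ l') = total_length l + total_length l'.
Proof. induction l as [|y l IH]; simpl; [ring|]. rewrite IH; ring. Qed.

Lemma total_length_flat_map {A} (f : A -> list (R * R)) c l :
  (forall x, total_length (f x) = c) -> total_length (flat_map f l) = INR (length l) * c.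
Proof.
  intros H. induction l as [|x l IH]; [simpl; ring|].
  cbn [flat_map length]. rewrite total_length_app, H, IH, S_INR; ring.
Qed.

Definition proper_intervals (l : list (R * R)) : Prop := forall y, In y l -> fst y <= snd y.

Lemma total_length_nonneg l : proper_intervals l -> 0 <= total_length l.
Proof.
  induction l as [|y l IH]; intros H; simpl; [lra|].
  assert (fst y <= snd y) by (apply H; left; reflexivity).
  assert (0 <= total_length l) by (apply IH; intros z Hz; apply H; right; exact Hz).
  lra.
Qed.

Lemma sumR_nth_length_le l N : proper_intervals l ->
  sumR N (fun n => snd (nth n l (0, 0)) - fst (nth n l (0, 0))) <= total_length l.
Proof.
  revert l; induction N as [|N IH]; intros l H; simpl; [apply total_length_nonneg, H|].
  destruct (Nat.lt_ge_cases N (length l)) as [HN|HN].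
  - destruct (nth_split l (0, 0) HN) as (l1 & l2 & Hl & Hlen).
    set (y := nth N l (0, 0)) in *.
    assert (Hp1 : proper_intervals l1) by (intros z Hz; apply H; rewrite Hl; apply in_or_app; left; exact Hz).
    assert (Hp2 : proper_intervals (y :: l2)) by (intros z Hz; apply H; rewrite Hl; apply in_or_app; right; exact Hz).
    assert (Htot : total_length l = total_length l1 + total_length (y :: l2)) by (rewrite Hl; apply total_length_app).
    rewrite (sumR_ext N _ (fun n => snd (nth n l1 (0, 0)) - fst (nth n l1 (0, 0)))).
    2: { intros i Hi. rewrite Hl, app_nth1 by lia. reflexivity. }
    specialize (IH l1 Hp1).
    pose proof (total_length_nonneg l2 (fun z Hz => Hp2 z (or_intror Hz))).
    rewrite Htot. simpl. lra.
  - rewrite nth_overflow by exact HN. specialize (IH l H). simpl. lra.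
Qed.

Fixpoint concat_upto (L : nat -> list (R * R)) (N : nat) : list (R * R) :=
  match N with O => L O | S n => concat_upto L n ++ L (S n) end.

Lemma concat_upto_prefix L N N' : (N <= N')%nat -> exists t, concat_upto L N' = concat_upto L N ++ t.
Proof.
  induction 1 as [|N' _ [t Ht]]; [exists nil; rewrite app_nil_r; reflexivity|].
  exists (t ++ L (S N')). simpl. rewrite Ht, app_assoc. reflexivity.
Qed.

Lemma In_concat_upto L j y : In y (L j) -> In y (concat_upto L j).
Proof. destruct j; simpl; [auto|]. intros; apply in_or_app; right; assumption. Qed.

Lemma total_length_concat_upto L N :
  total_length (concat_upto L N) = sumR (S N) (fun j => total_length (L j)).
Proof. induction N as [|N IH]; [simpl; ring|]. cbn [concat_upto]. rewrite total_length_app, IH. reflexivity. Qed.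

Section NonemptyLists.

Variable L : nat -> list (R * R).
Hypothesis L_nonempty : forall j, L j <> nil.

Lemma concat_upto_length N : (N < length (concat_upto L N))%nat.
Proof.
  induction N as [|N IH]; simpl.
  - destruct (L 0%nat) eqn:E; [contradiction (L_nonempty 0 E)|simpl; lia].
  - rewrite length_app. destruct (L (S N)) eqn:E; [contradiction (L_nonempty (S N) E)|simpl; lia].
Qed.

Lemma nth_concat_upto_stable N n : (n < length (concat_upto L N))%nat ->
  nth n (concat_upto L n) (0, 0) = nth n (concat_upto L N) (0, 0).
Proof.
  intros Hn. pose proof (concat_upto_length n).
  destruct (le_lt_dec n N) as [Hle|Hlt].
  - destruct (concat_upto_prefix L n N Hle) as [t ->]. rewrite app_nth1 by lia. reflexivity.
  - destruct (concat_upto_prefix L N n (Nat.lt_le_incl _ _ Hlt)) as [t ->].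
    rewrite app_nth1 by exact Hn. reflexivity.
Qed.

End NonemptyLists.

(* Each list is padded with the empty interval (0, 0), so that the n-th list
   already has an n-th entry and the intervals can be enumerated one by one. *)
Lemma small_angle_set_of_covers (E : R -> Prop) (eta total : R) (L : nat -> list (R * R)) :
  (forall j, proper_intervals (L j)) ->
  (forall N, sumR N (fun j => total_length (L j)) <= total) -> total < eta ->
  (forall theta, E theta -> exists j y, In y (L j) /\ fst y < theta < snd y) ->
  small_angle_set E eta.
Proof.
  intros Hprop Hsum Heta Hcov.
  set (L' := fun j => (0, 0) :: L j).
  assert (HL' : forall j, L' j <> nil) by discriminate.
  assert (Hprop' : forall N, proper_intervals (concat_upto L' N)).
  { induction N as [|N IH]; intros y Hy; simpl in Hy.
    - destruct Hy as [<-|Hy]; [simpl; lra|exact (Hprop 0%nat y Hy)].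
    - apply in_app_or in Hy. destruct Hy as [Hy|[<-|Hy]]; [exact (IH y Hy)|simpl; lra|exact (Hprop _ y Hy)]. }
  exists (fun n => fst (nth n (concat_upto L' n) (0, 0))), (fun n => snd (nth n (concat_upto L' n) (0, 0))).
  split; [|split].
  - intros n. destruct (Nat.lt_ge_cases n (length (concat_upto L' n))) as [Hn|Hn].
    + exact (Hprop' n _ (nth_In _ _ Hn)).
    + rewrite nth_overflow by exact Hn. simpl; lra.
  - exists total. split; [exact Heta|]. intros N.
    rewrite (sumR_ext N _ (fun n => snd (nth n (concat_upto L' N) (0, 0)) - fst (nth n (concat_upto L' N) (0, 0)))).
    2: { intros n Hn. pose proof (concat_upto_length L' HL' N).
         rewrite (nth_concat_upto_stable L' HL' N n) by lia. reflexivity. }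
    eapply Rle_trans; [apply sumR_nth_length_le, Hprop'|].
    rewrite total_length_concat_upto.
    rewrite (sumR_ext _ _ (fun j => total_length (L j))) by (intros; simpl; ring).
    eapply Rle_trans; [|apply (Hsum (S N))]. right; reflexivity.
  - intros theta Htheta. destruct (Hcov theta Htheta) as (j & y & Hy & Hth).
    destruct (In_nth (concat_upto L' j) y (0, 0)) as [n [Hn Hnth]].
    { apply In_concat_upto. right. exact Hy. }
    exists n. rewrite (nth_concat_upto_stable L' HL' j n Hn), Hnth. exact Hth.
Qed.

Lemma quarter_le_sin_lb y : 0 <= y <= 2 -> y / 4 <= sin_lb y.
Proof.
  intros Hy. unfold sin_lb, sin_approx, sin_term. cbn [sum_f_R0 Nat.mul Nat.add].
  rewrite !INR_IZR_INZ. simpl Z.of_nat. simpl pow.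
  assert (0 <= y * y <= 4) by nra.
  assert (0 <= y * y * y * y) by nra.
  assert (y * y * y * y * y * y <= 64) by nra.
  nra.
Qed.

Lemma sqr_le_16_sqr_sin y : - (PI / 2) <= y <= PI / 2 -> y * y <= 16 * (sin y * sin y).
Proof.
  intros Hy. pose proof PI_4. pose proof PI_RGT_0.
  destruct (Rle_lt_dec 0 y).
  - destruct (SIN y) as [Hs _]; try lra. pose proof (quarter_le_sin_lb y). nra.
  - destruct (SIN (- y)) as [Hs _]; try lra. pose proof (quarter_le_sin_lb (- y)).
    rewrite sin_neg in Hs. nra.
Qed.

Lemma sqr_le_64_one_minus_cos b : - PI <= b <= PI -> b * b <= 64 * (1 - cos b).
Proof.
  intros Hb. replace b with (2 * (b / 2)) at 3 by field. rewrite cos_2a_sin.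
  pose proof (sqr_le_16_sqr_sin (b / 2) ltac:(lra)). nra.
Qed.

Lemma cos_add_2IZRPI y z : cos (y + 2 * IZR z * PI) = cos y.
Proof.
  destruct z as [|p|p].
  - f_equal; ring.
  - replace (IZR (Z.pos p)) with (INR (Pos.to_nat p)) by (rewrite INR_IZR_INZ, positive_nat_Z; reflexivity).
    apply cos_period.
  - rewrite <- (cos_period _ (Pos.to_nat p)). f_equal.
    rewrite INR_IZR_INZ, positive_nat_Z, <- Pos2Z.opp_pos, opp_IZR. ring.
Qed.

(* [cmul (t, s) (sin th, - cos th)] moves [e^{i th}] by [s] along the outward
   normal and by [t] along the tangent; for [s >= 0] the moved point stays at
   distance at least [1 - cos (ph - th)] from [e^{i ph}]. *)
Lemma one_minus_cos_le_cdist th ph t s : 0 <= s ->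
  1 - cos (ph - th) <= cdist (cos ph, sin ph) (cadd (cos th, sin th) (cmul (t, s) (sin th, - cos th))).
Proof.
  intros Hs. unfold cdist, cadd, cmul; simpl. rewrite cos_minus.
  pose proof (sin2_cos2 ph) as Hph. pose proof (sin2_cos2 th) as Hth. unfold Rsqr in *.
  set (a := cos ph) in *. set (b := sin ph) in *. set (c := cos th) in *. set (e := sin th) in *.
  set (q := a * c + b * e). set (r := b * c - a * e).
  assert (Hqr : q * q + r * r = 1).
  { replace (q * q + r * r) with ((b * b + a * a) * (e * e + c * c)) by (unfold q, r; ring).
    rewrite Hph, Hth; ring. }
  destruct (Rle_lt_dec (1 - q) 0) as [Hq|Hq]; [apply Rle_trans with 0; [lra|apply sqrt_pos]|].
  rewrite <- (sqrt_square (1 - q)) at 1 by lra. apply sqrt_le_1_alt.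
  match goal with |- _ <= ?X => replace X with
    ((b * b + a * a) + ((1 + s) ^ 2 + t ^ 2) * (e * e + c * c) - 2 * (1 + s) * q + 2 * t * r)
    by (unfold q, r; ring) end.
  rewrite Hph, Hth.
  assert (0 <= s * (1 - q)) by (apply Rmult_le_pos; lra).
  pose proof (Rle_0_sqr (t + r)). pose proof (Rle_0_sqr s). unfold Rsqr in *.
  nra.
Qed.

Lemma tang_accessible_Upsilon_of_far d m w sigma A th :
  (forall k, knonzero d k -> / A * Rpower (knorm d k) (- sigma) <= 1 - cos (2 * PI * dotZR d k w - th)) ->
  tang_accessible m (Upsilon d w sigma A) (cos th, sin th).
Proof.
  intros Hfar. exists (sin th, - cos th). split.
  { unfold cnorm; simpl. pose proof (sin2_cos2 th). unfold Rsqr in *.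
    match goal with |- sqrt ?X = 1 => replace X with 1 by nra end. apply sqrt_1. }
  exists 1, 1. do 2 (split; [lra|]).
  intros t s _ _ Hs k Hk Hlt.
  assert (0 <= s) by (pose proof (pow_le (Rabs t) m (Rabs_pos t)); lra).
  pose proof (one_minus_cos_le_cdist th (2 * PI * dotZR d k w) t s ltac:(assumption)).
  specialize (Hfar k Hk). unfold expi2pi in Hlt. lra.
Qed.

Lemma bad_angle_near_resonance d m w sigma A th :
  bad_angles m (Upsilon d w sigma A) th ->
  exists k, knonzero d k /\ 1 - cos (2 * PI * dotZR d k w - th) < / A * Rpower (knorm d k) (- sigma).
Proof.
  intros [_ Hbad]. apply NNPP. intros Hnone. apply Hbad, tang_accessible_Upsilon_of_far.
  intros k Hk. apply Rnot_lt_le. intros Hlt. apply Hnone. exists k. split; assumption.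
Qed.

Fixpoint knormZ (d : nat) (k : nat -> Z) : Z :=
  match d with O => 0%Z | S d' => (knormZ d' k + Z.abs (k d'))%Z end.

Lemma knorm_IZR d k : knorm d k = IZR (knormZ d k).
Proof. unfold knorm. induction d as [|d IH]; simpl; [reflexivity|]. rewrite IH, plus_IZR. reflexivity. Qed.

Lemma knormZ_nonneg d k : (0 <= knormZ d k)%Z.
Proof. induction d; simpl; lia. Qed.

Lemma Zabs_le_knormZ d k i : (i < d)%nat -> (Z.abs (k i) <= knormZ d k)%Z.
Proof.
  induction d as [|d IH]; intros Hi; [lia|]. simpl.
  pose proof (knormZ_nonneg d k).
  destruct (Nat.eq_dec i d) as [->|Hne]; [lia|]. specialize (IH ltac:(lia)). lia.
Qed.

Lemma knorm_dyadic d k : knonzero d k ->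
  exists j, 2 ^ j <= knorm d k /\ forall i, (i < d)%nat -> (Z.abs (k i) <= Z.of_nat (2 ^ S j))%Z.
Proof.
  intros [i0 [Hi0 Hk0]]. pose proof (Zabs_le_knormZ d k i0 Hi0).
  set (n := Z.to_nat (knormZ d k)).
  assert (Hn : Z.of_nat n = knormZ d k) by (unfold n; rewrite Z2Nat.id by lia; reflexivity).
  destruct (Nat.log2_spec n ltac:(lia)) as [Hlo Hhi].
  exists (Nat.log2 n). split.
  - rewrite knorm_IZR, <- Hn, <- INR_IZR_INZ. replace 2 with (INR 2) by reflexivity.
    rewrite <- pow_INR. apply le_INR, Hlo.
  - intros i Hi. pose proof (Zabs_le_knormZ d k i Hi). lia.
Qed.

Definition zinterval (M : nat) : list Z := map (fun n => (Z.of_nat n - Z.of_nat M)%Z) (seq 0 (2 * M + 1)).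

Lemma in_zinterval z M : (Z.abs z <= Z.of_nat M)%Z -> In z (zinterval M).
Proof.
  intros H. apply in_map_iff. exists (Z.to_nat (z + Z.of_nat M)). split.
  - rewrite Z2Nat.id by lia. lia.
  - apply in_seq. lia.
Qed.

Fixpoint box (d M : nat) : list (nat -> Z) :=
  match d with
  | O => (fun _ => 0%Z) :: nil
  | S d' => flat_map (fun k => map (fun z i => if Nat.eqb i d' then z else k i) (zinterval M)) (box d' M)
  end.

Lemma length_box d M : length (box d M) = ((2 * M + 1) ^ d)%nat.
Proof.
  induction d as [|d IH]; [reflexivity|]. cbn [box].
  assert (Hlen : forall l : list (nat -> Z), length (flat_map (fun k => map (fun z i => if Nat.eqb i d then z else k i) (zinterval M)) l)
                 = (length l * (2 * M + 1))%nat).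
  { induction l as [|k l IHl]; [reflexivity|]. cbn [flat_map length].
    rewrite length_app, IHl, length_map. unfold zinterval. rewrite length_map, length_seq. lia. }
  rewrite Hlen, IH, Nat.pow_succ_r'. apply Nat.mul_comm.
Qed.

Lemma box_complete d M k : (forall i, (i < d)%nat -> (Z.abs (k i) <= Z.of_nat M)%Z) ->
  exists k', In k' (box d M) /\ forall i, (i < d)%nat -> k' i = k i.
Proof.
  induction d as [|d IH]; intros H.
  - exists (fun _ => 0%Z). split; [left; reflexivity|intros; lia].
  - destruct IH as [k' [Hin Hagree]]; [intros; apply H; lia|].
    exists (fun i => if Nat.eqb i d then k d else k' i). split.
    + cbn [box]. apply in_flat_map. exists k'. split; [exact Hin|].
      apply in_map_iff. exists (k d). split; [reflexivity|]. apply in_zinterval, H. lia.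
    + intros i Hi. destruct (Nat.eqb_spec i d) as [->|Hne]; [reflexivity|]. apply Hagree. lia.
Qed.

Definition resonance_angle d w k : R := 2 * PI * (dotZR d k w - IZR (Zfloor (dotZR d k w))).

Lemma resonance_angle_range d w k : 0 <= resonance_angle d w k < 2 * PI.
Proof. unfold resonance_angle. pose proof (Zfloor_bound (dotZR d k w)). pose proof PI_RGT_0. nra. Qed.

Lemma cos_resonance_angle d w k th :
  cos (resonance_angle d w k - th) = cos (2 * PI * dotZR d k w - th).
Proof.
  rewrite <- (cos_add_2IZRPI _ (Zfloor (dotZR d k w))). unfold resonance_angle. f_equal. ring.
Qed.

Lemma dotZR_ext d k k' w : (forall i, (i < d)%nat -> k' i = k i) -> dotZR d k' w = dotZR d k w.
Proof. intros H. apply sumR_ext. intros i Hi. rewrite H by exact Hi. reflexivity. Qed.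

Definition arcs (c r : R) : list (R * R) :=
  (c - 2 * PI - r, c - 2 * PI + r) :: (c - r, c + r) :: (c + 2 * PI - r, c + 2 * PI + r) :: nil.

Lemma near_angle_in_arcs c th eps r : 0 <= c < 2 * PI -> 0 <= th < 2 * PI ->
  1 - cos (c - th) < eps -> 64 * eps <= r * r -> 0 <= r ->
  exists y, In y (arcs c r) /\ fst y < th < snd y.
Proof.
  intros Hc Hth Hcos Hr Hr0. pose proof PI_RGT_0.
  assert (Hclose : forall b, - PI <= b <= PI -> 1 - cos b < eps -> - r < b < r).
  { intros b Hb Hb'. pose proof (sqr_le_64_one_minus_cos b Hb). split; nra. }
  destruct (Rlt_le_dec PI (c - th)) as [H1|H1]; [|destruct (Rle_lt_dec (- PI) (c - th)) as [H2|H2]].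
  - rewrite <- (cos_add_2IZRPI _ (-1)) in Hcos.
    specialize (Hclose (c - th + 2 * IZR (-1) * PI) ltac:(simpl; lra) Hcos).
    exists (c - 2 * PI - r, c - 2 * PI + r). split; [left; reflexivity|simpl in *; lra].
  - specialize (Hclose (c - th) ltac:(lra) Hcos).
    exists (c - r, c + r). split; [right; left; reflexivity|simpl; lra].
  - rewrite <- (cos_add_2IZRPI _ 1) in Hcos.
    specialize (Hclose (c - th + 2 * IZR 1 * PI) ltac:(simpl; lra) Hcos).
    exists (c + 2 * PI - r, c + 2 * PI + r). split; [right; right; left; reflexivity|simpl in *; lra].
Qed.

Definition shell_cover d w (r : R) (M : nat) : list (R * R) :=
  flat_map (fun k => arcs (resonance_angle d w k) r) (box d M).

Lemma proper_shell_cover d w r M : 0 <= r -> proper_intervals (shell_cover d w r M).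
Proof.
  intros Hr y Hy. apply in_flat_map in Hy. destruct Hy as [k [_ Hy]].
  destruct Hy as [<-|[<-|[<-|[]]]]; simpl; lra.
Qed.

Lemma total_length_shell_cover d w r M :
  total_length (shell_cover d w r M) = INR ((2 * M + 1) ^ d) * (6 * r).
Proof.
  unfold shell_cover. rewrite (total_length_flat_map _ (6 * r)), length_box; [reflexivity|].
  intros k. simpl. ring.
Qed.

Lemma resonance_in_shell_cover d w k th eps r M :
  (forall i, (i < d)%nat -> (Z.abs (k i) <= Z.of_nat M)%Z) -> 0 <= th < 2 * PI ->
  1 - cos (2 * PI * dotZR d k w - th) < eps -> 64 * eps <= r * r -> 0 <= r ->
  exists y, In y (shell_cover d w r M) /\ fst y < th < snd y.
Proof.
  intros Hk Hth Hcos Hr Hr0.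
  destruct (box_complete d M k Hk) as [k' [Hin Hagree]].
  rewrite <- (dotZR_ext d k k' w Hagree), <- cos_resonance_angle in Hcos.
  destruct (near_angle_in_arcs _ th eps r (resonance_angle_range d w k') Hth Hcos Hr Hr0) as [y [Hy Hyth]].
  exists y. split; [apply in_flat_map; exists k'; split; assumption|exact Hyth].
Qed.

Lemma pow_Rpower_half_neg sigma j :
  Rpower 2 (- (sigma / 2)) ^ j * Rpower 2 (- (sigma / 2)) ^ j = Rpower (2 ^ j) (- sigma).
Proof.
  rewrite <- Rpower_pow by apply exp_pos.
  rewrite <- (Rpower_pow j 2) by lra.
  rewrite !Rpower_mult, <- Rpower_plus. f_equal. field.
Qed.

Lemma Rpower_neg_le_dyadic n j sigma : 0 <= sigma -> 2 ^ j <= n ->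
  Rpower n (- sigma) <= Rpower 2 (- (sigma / 2)) ^ j * Rpower 2 (- (sigma / 2)) ^ j.
Proof.
  intros Hs Hn. pose proof (pow_lt 2 j ltac:(lra)).
  rewrite pow_Rpower_half_neg, !Rpower_Ropp.
  assert (0 < Rpower (2 ^ j) sigma) by apply exp_pos.
  apply Rinv_le_contravar; [assumption|]. apply Rle_Rpower_l; lra.
Qed.

Lemma dyadic_ratio_lt_1 d sigma : 2 * INR d < sigma -> 2 ^ d * Rpower 2 (- (sigma / 2)) < 1.
Proof.
  intros Hs. rewrite <- (Rpower_pow d 2), <- Rpower_plus, <- (Rpower_O 2) by lra.
  apply Rpower_lt; lra.
Qed.

Lemma total_length_dyadic_shell_le d w B x j : 0 <= B -> 0 <= x ->
  total_length (shell_cover d w (B * x ^ j) (2 ^ S j)) <= 6 * B * 8 ^ d * (2 ^ d * x) ^ j.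
Proof.
  intros HB Hx. rewrite total_length_shell_cover, pow_INR.
  assert (Hside : INR (2 * 2 ^ S j + 1) <= 8 * 2 ^ j).
  { rewrite plus_INR, mult_INR, pow_INR. replace (INR 2) with 2 by (simpl; ring).
    pose proof (pow_R1_Rle 2 j ltac:(lra)). simpl. lra. }
  assert (0 <= B * x ^ j) by (apply Rmult_le_pos; [|apply pow_le]; assumption).
  apply Rle_trans with ((8 * 2 ^ j) ^ d * (6 * (B * x ^ j))).
  - apply Rmult_le_compat_r; [lra|]. apply pow_incr. split; [apply pos_INR|exact Hside].
  - right. rewrite !Rpow_mult_distr, <- !pow_mult, Nat.mul_comm. ring.
Qed.

(* The shell [2^j <= |k| < 2^(j+1)] is covered by arcs of radius [B x^j], with
   [x = 2^(-sigma/2)]; the total length is geometric in [q = 2^d x < 1], and [B]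
   is chosen so that it stays below [eta / 2]. *)
Lemma bad_angles_small d m w sigma : 2 * INR d < sigma -> forall eta, 0 < eta ->
  exists A, 0 < A /\ small_angle_set (bad_angles m (Upsilon d w sigma A)) eta.
Proof.
  intros Hsig eta Heta.
  assert (Hs0 : 0 <= sigma) by (pose proof (pos_INR d); lra).
  set (x := Rpower 2 (- (sigma / 2))).
  assert (Hx : 0 < x) by apply exp_pos.
  set (q := 2 ^ d * x).
  assert (Hq : 0 <= q < 1) by (split; [pose proof (pow_lt 2 d ltac:(lra)); unfold q; nra|apply dyadic_ratio_lt_1, Hsig]).
  assert (H8 : 0 < 8 ^ d) by (apply pow_lt; lra).
  set (B := eta * (1 - q) / (12 * 8 ^ d)).
  assert (HB : 0 < B) by (unfold B; apply Rdiv_lt_0_compat; nra).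
  exists (64 / (B * B)). split; [apply Rdiv_lt_0_compat; nra|].
  apply (small_angle_set_of_covers _ eta (eta / 2) (fun j => shell_cover d w (B * x ^ j) (2 ^ S j))).
  - intros j. apply proper_shell_cover. pose proof (pow_lt x j Hx). nra.
  - intros N. eapply Rle_trans.
    { apply sumR_le. intros j _. apply total_length_dyadic_shell_le; lra. }
    rewrite sumR_scal. apply Rle_trans with (6 * B * 8 ^ d * / (1 - q)).
    + apply Rmult_le_compat_l; [nra|apply sumR_geom_le, Hq].
    + right. unfold B. field. lra.
  - lra.
  - intros th Hbad. pose proof Hbad as [Hth _].
    destruct (bad_angle_near_resonance d m w sigma _ th Hbad) as [k [Hk Hcos]].
    destruct (knorm_dyadic d k Hk) as [j [Hlow Hbox]].
    exists j. apply (resonance_in_shell_cover d w k th _ _ _ Hbox Hth Hcos).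
    + pose proof (Rpower_neg_le_dyadic (knorm d k) j sigma Hs0 Hlow) as Hdecay.
      replace (64 * (/ (64 / (B * B)) * Rpower (knorm d k) (- sigma))) with (B * B * Rpower (knorm d k) (- sigma))
        by (field; lra).
      fold x in Hdecay. replace (B * x ^ j * (B * x ^ j)) with (B * B * (x ^ j * x ^ j)) by ring.
      apply Rmult_le_compat_l; nra.
    + pose proof (pow_lt x j Hx). nra.
Qed.

Lemma small_angle_set_mono (E E' : R -> Prop) eta :
  (forall th, E th -> E' th) -> small_angle_set E' eta -> small_angle_set E eta.
Proof.
  intros HE (a & b & Hab & Hlen & Hcov). exists a, b. split; [exact Hab|]. split; [exact Hlen|].
  intros th Hth. exact (Hcov th (HE th Hth)).
Qed.

Lemma bad_angles_antimono m (C C' : R * R -> Prop) th :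
  (forall lam, C lam -> C' lam) -> bad_angles m C' th -> bad_angles m C th.
Proof.
  intros HC [Hth Hna]. split; [exact Hth|]. intros (u & Hu & delta & gamma & Hd & Hg & Hreg).
  apply Hna. exists u. split; [exact Hu|]. exists delta, gamma. do 2 (split; [assumption|]).
  intros t s Ht Hs Hts. apply HC, Hreg; assumption.
Qed.

Theorem mainTheorem4 (d m : nat) (w : nat -> R) (sigma : R) :
  (2 <= m)%nat ->
  INR m * INR d < sigma ->
  nu_finite d w sigma ->
  (forall eps : R, 0 < eps ->
     small_angle_set
       (bad_angles m (fun lam => exists A, 0 < A /\ Upsilon d w sigma A lam)) eps) /\
  (forall eta : R, 0 < eta ->
     exists A : R, 0 < A /\
       small_angle_set (bad_angles m (Upsilon d w sigma A)) eta).
Proof.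
  intros Hm Hsig _.
  assert (Hd : 2 * INR d < sigma).
  { assert (2 <= INR m) by (replace 2 with (INR 2) by (simpl; ring); apply le_INR, Hm).
    pose proof (pos_INR d). nra. }
  pose proof (bad_angles_small d m w sigma Hd) as Hsmall.
  split; [|exact Hsmall].
  intros eps Heps. destruct (Hsmall eps Heps) as [A [HA Hset]].
  assert (Hsub : forall lam, Upsilon d w sigma A lam -> exists A', 0 < A' /\ Upsilon d w sigma A' lam)
    by (intros lam Hlam; exists A; split; assumption).
  exact (small_angle_set_mono _ _ eps (fun th => bad_angles_antimono m _ _ th Hsub) Hset).
Qed.
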